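(* Let $\alpha,\beta>0$, $k\ge0$ an integer, and $\lambda=\Gamma(\alpha k+\alpha+\beta)/\Gamma(\alpha k+\beta)$. If $X\sim\mathrm{MLFD}(\lambda,\alpha,\beta)$, then $P(X=k)=P(X=k+1)$ and $P(X=k)>P(X=j)$ for every integer $j\ge0$ with $j\notin\{k,k+1\}$; i.e. $X$ has exactly the two modes $k$ and $k+1$.
   Context: For $\alpha>0,\beta>0$ and $z\in\mathbb{C}$, the generalized Mittag-Leffler function is $E_{\alpha,\beta}(z)=\sum_{k=0}^\infty z^k/\Gamma(\alpha k+\beta)$. For $\lambda,\alpha,\beta>0$, the Mittag-Leffler function distribution $\mathrm{MLFD}(\lambda,\alpha,\beta)$ is the distribution on $\{0,1,2,\dots\}$ with $P(X=k)=\lambda^k/\{\Gamma(\alpha k+\beta)E_{\alpha,\beta}(\lambda)\}$. *)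

From Stdlib Require Import Reals Rprod Factorial ClassicalEpsilon.
Open Scope R_scope.

(* Gauss/Euler limit form of the Gamma function:
   Gamma(x) = lim_{n->oo} n! n^x / (x (x+1) ... (x+n)),  valid for x > 0. *)
Definition Gamma_seq (x : R) (n : nat) : R :=
  INR (fact n) * Rpower (INR n) x / prod_f_R0 (fun i => x + INR i) n.

Definition Gamma (x : R) : R :=
  epsilon (inhabits 0) (fun l => Un_cv (Gamma_seq x) l).

Definition MittagLeffler (alpha beta z : R) : R :=
  epsilon (inhabits 0)
    (fun l => infinite_sum (fun k => z ^ k / Gamma (alpha * INR k + beta)) l).

Definition MLFD_pmf (lambda alpha beta : R) (k : nat) : R :=
  lambda ^ k / (Gamma (alpha * INR k + beta) * MittagLeffler alpha beta lambda).

(** With [t_j = λ^j / Γ(αj+β)] one has [t_{j+1} = t_j · λ / r_j], where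
    [r_j = Γ(αj+α+β) / Γ(αj+β)], and the choice [λ = r_k] makes this factor equal
    to 1 at [j = k]. Log-convexity of Γ, proved on Euler's products
    [Γ_n(x) = n! n^x / (x(x+1)···(x+n))] and passed to the limit, makes [r_j]
    strictly increasing; hence the terms increase strictly up to [t_k = t_{k+1}] and
    decrease strictly afterwards.  Since [λ < r_{k+1}], the terms eventually decay
    geometrically, so [E_{α,β}(λ)] is a convergent sum of positive terms and the
    normalisation is positive. *)

From Stdlib Require Import Reals Rprod Factorial ClassicalEpsilon Lra Lia.
Open Scope R_scope.

Notation shifted_prod x n := (prod_f_R0 (fun i => x + INR i) n).

Lemma exp_le a b : a <= b -> exp a <= exp b.
Proof. intros [Hlt | ->]; [left; apply exp_increasing | right]; auto. Qed.

Lemma ln_le_sub_1 z : 0 < z -> ln z <= z - 1.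
Proof.
  intros Hz. pose proof (exp_ineq1_le (ln z)) as H. rewrite exp_ln in H; lra.
Qed.

Lemma ln_ge_1_sub_inv z : 0 < z -> 1 - / z <= ln z.
Proof.
  intros Hz. pose proof (ln_le_sub_1 (/ z) (Rinv_0_lt_compat _ Hz)) as H.
  rewrite ln_Rinv in H; lra.
Qed.

Lemma Un_cv_const c : Un_cv (fun _ => c) c.
Proof.
  intros eps Heps. exists 0%nat. intros n _.
  unfold Rdist. rewrite Rminus_diag, Rabs_R0. lra.
Qed.

Lemma shifted_prod_pos x n : 0 < x -> 0 < shifted_prod x n.
Proof.
  intros Hx. induction n as [|n IH]; [simpl; lra|].
  change (shifted_prod x (S n)) with (shifted_prod x n * (x + INR (S n))).
  apply Rmult_lt_0_compat; [exact IH|]. pose proof (pos_INR (S n)); lra.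
Qed.

Section GammaSeq.

Variable x : R.
Hypothesis x_pos : 0 < x.

Lemma Gamma_seq_pos n : 0 < Gamma_seq x n.
Proof.
  unfold Gamma_seq, Rdiv. repeat apply Rmult_lt_0_compat.
  - apply INR_fact_lt_0.
  - apply exp_pos.
  - apply Rinv_0_lt_compat, shifted_prod_pos, x_pos.
Qed.

Definition Gamma_seq_factor (n : nat) : R :=
  Rpower ((INR n + 2) / (INR n + 1)) x * (INR n + 2) / (x + INR n + 2).

(* Only from [n = 1] on: at [n = 0] the factor [Rpower 0 x] is the junk value [1]. *)
Lemma Gamma_seq_succ n : Gamma_seq x (S (S n)) = Gamma_seq x (S n) * Gamma_seq_factor n.
Proof.
  unfold Gamma_seq, Gamma_seq_factor.
  change (fact (S (S n))) with (S (S n) * fact (S n))%nat. rewrite mult_INR.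
  change (shifted_prod x (S (S n))) with (shifted_prod x (S n) * (x + INR (S (S n)))).
  replace (INR (S (S n))) with (INR n + 2) by (rewrite !S_INR; ring).
  replace (INR (S n)) with (INR n + 1) by (rewrite S_INR; ring).
  pose proof (pos_INR n). pose proof (shifted_prod_pos x (S n) x_pos).
  replace (Rpower (INR n + 2) x)
    with (Rpower (INR n + 1) x * Rpower ((INR n + 2) / (INR n + 1)) x).
  2:{ rewrite Rpower_mult_distr by (try apply Rdiv_lt_0_compat; lra).
      f_equal; field; lra. }
  field; lra.
Qed.

Lemma Gamma_seq_factor_ge_1 n : 1 <= Gamma_seq_factor n.
Proof.
  unfold Gamma_seq_factor. set (p := INR n + 1).
  assert (Hp : 1 <= p) by (pose proof (pos_INR n); unfold p; lra).
  replace (x + INR n + 2) with (x + p + 1) by (unfold p; ring).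
  replace (INR n + 2) with (p + 1) by (unfold p; ring).
  assert (Hln : 1 / (p + 1) <= ln ((p + 1) / p)).
  { replace (1 / (p + 1)) with (1 - / ((p + 1) / p)) by (field; lra).
    apply ln_ge_1_sub_inv, Rdiv_lt_0_compat; lra. }
  assert (Hpow : 1 + x * (1 / (p + 1)) <= Rpower ((p + 1) / p) x).
  { eapply Rle_trans; [apply exp_ineq1_le | apply exp_le].
    apply Rmult_le_compat_l; lra. }
  apply Rle_trans with ((1 + x * (1 / (p + 1))) * (p + 1) / (x + p + 1)).
  - right; field; lra.
  - unfold Rdiv. apply Rmult_le_compat_r; [left; apply Rinv_0_lt_compat; lra|].
    apply Rmult_le_compat_r; lra.
Qed.

Lemma Gamma_seq_factor_le_exp n :
  Gamma_seq_factor n <= exp (x * (x + 1) * (/ (INR n + 1) - / (INR n + 2))).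
Proof.
  unfold Gamma_seq_factor. set (p := INR n + 1).
  assert (Hp : 1 <= p) by (pose proof (pos_INR n); unfold p; lra).
  replace (x + INR n + 2) with (x + p + 1) by (unfold p; ring).
  replace (INR n + 2) with (p + 1) by (unfold p; ring).
  assert (Hpow : Rpower ((p + 1) / p) x <= exp (x / p)).
  { apply exp_le. replace (x / p) with (x * ((p + 1) / p - 1)) by (field; lra).
    apply Rmult_le_compat_l; [lra|]. apply ln_le_sub_1, Rdiv_lt_0_compat; lra. }
  assert (Hfrac : (p + 1) / (x + p + 1) <= exp (- (x / (x + p + 1)))).
  { eapply Rle_trans; [right | apply exp_ineq1_le]. field; lra. }
  assert (Hexp : x / p - x / (x + p + 1) <= x * (x + 1) * (/ p - / (p + 1))).
  { replace (x / p - x / (x + p + 1)) with (x * (x + 1) * / (p * (x + p + 1)))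
      by (field; lra).
    replace (/ p - / (p + 1)) with (/ (p * (p + 1))) by (field; lra).
    apply Rmult_le_compat_l; [nra|]. apply Rinv_le_contravar; nra. }
  apply Rle_trans with (exp (x / p) * exp (- (x / (x + p + 1)))).
  - replace (Rpower ((p + 1) / p) x * (p + 1) / (x + p + 1))
      with (Rpower ((p + 1) / p) x * ((p + 1) / (x + p + 1))) by (field; lra).
    apply Rmult_le_compat; [left; apply exp_pos | left; apply Rdiv_lt_0_compat; lra
                           | exact Hpow | exact Hfrac].
  - rewrite <- exp_plus. apply exp_le. lra.
Qed.

(* The exponents telescope. *)
Lemma Gamma_seq_le n :
  Gamma_seq x (S n) <= Gamma_seq x 1 * exp (x * (x + 1) * (1 - / (INR n + 1))).
Proof.
  induction n as [|n IH].
  - simpl. replace (x * (x + 1) * (1 - / (0 + 1))) with 0 by field.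
    rewrite exp_0; lra.
  - rewrite Gamma_seq_succ.
    pose proof (Gamma_seq_factor_le_exp n). pose proof (Gamma_seq_factor_ge_1 n).
    pose proof (Gamma_seq_pos (S n)).
    eapply Rle_trans; [apply Rmult_le_compat; [lra | lra | exact IH | eassumption]|].
    rewrite Rmult_assoc, <- exp_plus, S_INR. right. do 2 f_equal.
    replace (INR n + 1 + 1) with (INR n + 2) by ring. ring.
Qed.

Lemma Gamma_seq_cv_pos : exists l, Un_cv (Gamma_seq x) l /\ 0 < l.
Proof.
  set (u n := Gamma_seq x (S n)).
  assert (Hgrow : Un_growing u).
  { intros n. unfold u. rewrite Gamma_seq_succ.
    pose proof (Gamma_seq_factor_ge_1 n). pose proof (Gamma_seq_pos (S n)). nra. }
  assert (Hub : has_ub u).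
  { exists (Gamma_seq x 1 * exp (x * (x + 1))). intros y [n ->].
    eapply Rle_trans; [apply Gamma_seq_le|].
    apply Rmult_le_compat_l; [left; apply Gamma_seq_pos|]. apply exp_le.
    assert (0 < / (INR n + 1)) by (apply Rinv_0_lt_compat; pose proof (pos_INR n); lra).
    nra. }
  destruct (growing_cv u Hgrow Hub) as [l Hl].
  exists l. split.
  - apply (CV_shift _ 1). intros eps Heps. destruct (Hl eps Heps) as [N HN].
    exists N. intros n Hn. rewrite Nat.add_1_r. exact (HN n Hn).
  - pose proof (growing_ineq u l Hgrow Hl 0). pose proof (Gamma_seq_pos 1).
    unfold u in *. lra.
Qed.

End GammaSeq.

Lemma Gamma_cv x : 0 < x -> Un_cv (Gamma_seq x) (Gamma x).
Proof.
  intros Hx. destruct (Gamma_seq_cv_pos x Hx) as [l [Hl _]].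
  unfold Gamma. apply epsilon_spec. exists l; exact Hl.
Qed.

Lemma Gamma_pos x : 0 < x -> 0 < Gamma x.
Proof.
  intros Hx. destruct (Gamma_seq_cv_pos x Hx) as [l [Hl Hpos]].
  rewrite (UL_sequence _ _ _ (Gamma_cv x Hx) Hl). exact Hpos.
Qed.

Lemma shifted_prod_cross x y a n : 0 < x < y -> 0 < a ->
  y * (x + a) * (shifted_prod x n * shifted_prod (y + a) n)
  <= x * (y + a) * (shifted_prod y n * shifted_prod (x + a) n).
Proof.
  intros [Hx Hxy] Ha. induction n as [|n IH]; [simpl; right; ring|].
  change (shifted_prod ?z (S n)) with (shifted_prod z n * (z + INR (S n))).
  pose proof (pos_INR (S n)). set (m := INR (S n)) in *.
  pose proof (shifted_prod_pos x n Hx). pose proof (shifted_prod_pos y n ltac:(lra)).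
  pose proof (shifted_prod_pos (x + a) n ltac:(lra)).
  pose proof (shifted_prod_pos (y + a) n ltac:(lra)).
  set (A := shifted_prod x n) in *. set (B := shifted_prod (y + a) n) in *.
  set (C := shifted_prod y n) in *. set (D := shifted_prod (x + a) n) in *.
  assert (Hstep : (x + m) * (y + a + m) <= (y + m) * (x + a + m)) by nra.
  replace (y * (x + a) * (A * (x + m) * (B * (y + a + m))))
    with (y * (x + a) * (A * B) * ((x + m) * (y + a + m))) by ring.
  replace (x * (y + a) * (C * (y + m) * (D * (x + a + m))))
    with (x * (y + a) * (C * D) * ((y + m) * (x + a + m))) by ring.
  apply Rmult_le_compat; [| nra | exact IH | exact Hstep].
  left; repeat apply Rmult_lt_0_compat; lra.
Qed.

Lemma Gamma_seq_cross x y a n : 0 < x < y -> 0 < a ->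
  y * (x + a) * (Gamma_seq y n * Gamma_seq (x + a) n)
  <= x * (y + a) * (Gamma_seq x n * Gamma_seq (y + a) n).
Proof.
  intros [Hx Hxy] Ha. unfold Gamma_seq.
  pose proof (shifted_prod_cross x y a n (conj Hx Hxy) Ha) as Hcross.
  pose proof (shifted_prod_pos x n Hx). pose proof (shifted_prod_pos y n ltac:(lra)).
  pose proof (shifted_prod_pos (x + a) n ltac:(lra)).
  pose proof (shifted_prod_pos (y + a) n ltac:(lra)).
  set (A := shifted_prod x n) in *. set (B := shifted_prod (y + a) n) in *.
  set (C := shifted_prod y n) in *. set (D := shifted_prod (x + a) n) in *.
  set (F := INR (fact n)). set (g z := Rpower (INR n) z).
  assert (Hg : g x * g (y + a) = g y * g (x + a)).
  { unfold g. rewrite <- !Rpower_plus. f_equal; ring. }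
  assert (HG : 0 < F * F * (g y * g (x + a))).
  { pose proof (INR_fact_lt_0 n). unfold g, Rpower.
    pose proof (exp_pos (y * ln (INR n))). pose proof (exp_pos ((x + a) * ln (INR n))).
    unfold F. repeat apply Rmult_lt_0_compat; assumption. }
  replace (y * (x + a) * (F * g y / C * (F * g (x + a) / D)))
    with (F * F * (g y * g (x + a)) * (y * (x + a) * (A * B)) / (A * B * C * D))
    by (field; repeat split; lra).
  replace (x * (y + a) * (F * g x / A * (F * g (y + a) / B)))
    with (F * F * (g y * g (x + a)) * (x * (y + a) * (C * D)) / (A * B * C * D))
    by (rewrite <- Hg; field; repeat split; lra).
  apply Rmult_le_compat_r; [left; apply Rinv_0_lt_compat; repeat apply Rmult_lt_0_compat; lra|].
  apply Rmult_le_compat_l; [lra | exact Hcross].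
Qed.

(* Passing to the limit only gives [<=] with the constant [x(y+a) < y(x+a)],
   which is where strictness comes from. *)
Lemma Gamma_cross_lt x y a : 0 < x < y -> 0 < a ->
  Gamma y * Gamma (x + a) < Gamma x * Gamma (y + a).
Proof.
  intros [Hx Hxy] Ha.
  pose proof (Gamma_cv x Hx) as Cx. pose proof (Gamma_cv y ltac:(lra)) as Cy.
  pose proof (Gamma_cv (x + a) ltac:(lra)) as Cxa.
  pose proof (Gamma_cv (y + a) ltac:(lra)) as Cya.
  assert (Hle : y * (x + a) * (Gamma y * Gamma (x + a))
                <= x * (y + a) * (Gamma x * Gamma (y + a))).
  { apply (Rle_cv_lim (fun n => Gamma_seq_cross x y a n (conj Hx Hxy) Ha));
      repeat apply CV_mult; solve [apply Un_cv_const | assumption]. }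
  assert (0 < Gamma x * Gamma (y + a))
    by (apply Rmult_lt_0_compat; apply Gamma_pos; lra).
  assert (Hc : x * (y + a) < y * (x + a)) by nra.
  apply (Rmult_lt_reg_l (y * (x + a))); [nra|].
  apply (Rle_lt_trans _ _ _ Hle). apply Rmult_lt_compat_r; assumption.
Qed.

Lemma Rlt_chain (f : nat -> R) i j :
  (forall m, (i <= m < j)%nat -> f m < f (S m)) -> (i < j)%nat -> f i < f j.
Proof.
  intros Hf Hij. induction Hij as [|j Hij IH].
  - apply Hf; lia.
  - apply Rlt_trans with (f j); [apply IH | apply Hf]; intros; try apply Hf; lia.
Qed.

(* [S_n + B t_n] with [B = q/(1-q)] is nonincreasing once the ratio bound holds. *)
Lemma sum_cv_of_ratio_le (t : nat -> R) (N : nat) (q : R) :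
  (forall n, 0 < t n) -> 0 <= q < 1 ->
  (forall m, (N <= m)%nat -> t (S m) <= q * t m) ->
  {l | Un_cv (sum_f_R0 t) l}.
Proof.
  intros Ht Hq Hratio.
  set (B := q / (1 - q)).
  assert (HB : 0 <= B) by (unfold B; apply Rmult_le_pos; [lra | left; apply Rinv_0_lt_compat; lra]).
  assert (HBq : (1 + B) * q = B) by (unfold B; field; lra).
  assert (Hgrow : Un_growing (sum_f_R0 t))
    by (intros n; simpl; pose proof (Ht (S n)); lra).
  assert (Hinv : forall m, sum_f_R0 t (N + m) + B * t (N + m)%nat
                           <= sum_f_R0 t N + B * t N).
  { induction m as [|m IH]; [rewrite Nat.add_0_r; lra|].
    rewrite Nat.add_succ_r. simpl.
    pose proof (Hratio (N + m)%nat ltac:(lia)) as Hm.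
    assert ((1 + B) * t (S (N + m)) <= B * t (N + m)%nat)
      by (rewrite <- HBq at 2; rewrite Rmult_assoc; apply Rmult_le_compat_l; lra).
    lra. }
  apply growing_cv; [exact Hgrow|].
  exists (sum_f_R0 t N + B * t N). intros y [n ->].
  destruct (Nat.le_gt_cases n N) as [HnN | HNn].
  - pose proof (growing_prop _ N n Hgrow HnN). pose proof (Ht N). nra.
  - replace n with (N + (n - N))%nat by lia.
    pose proof (Hinv (n - N)%nat). pose proof (Ht (N + (n - N))%nat). nra.
Qed.

Lemma infinite_sum_pos (t : nat -> R) (l : R) :
  (forall n, 0 < t n) -> infinite_sum t l -> 0 < l.
Proof.
  intros Ht Hl. apply Rlt_le_trans with (sum_f_R0 t 0); [exact (Ht 0%nat)|].
  apply (sum_incr t 0 l Hl). intros n; left; apply Ht.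
Qed.

Lemma two_modes_of_ratio (t rho : nat -> R) (k : nat) :
  (forall j, 0 < t j) -> (forall j, t (S j) = t j * rho j) ->
  (forall j, (j < k)%nat -> 1 < rho j) -> rho k = 1 ->
  (forall j, (k < j)%nat -> rho j < 1) ->
  t k = t (S k) /\ (forall j, j <> k -> j <> S k -> t j < t k).
Proof.
  intros Ht Hsucc Hup Hmode Hdown.
  assert (Heq : t k = t (S k)) by (rewrite Hsucc, Hmode; ring).
  split; [exact Heq|]. intros j Hjk HjSk.
  destruct (Nat.lt_ge_cases j k) as [Hlt | Hge].
  - apply Rlt_chain; [|exact Hlt]. intros m Hm.
    rewrite Hsucc. pose proof (Ht m). pose proof (Hup m ltac:(lia)). nra.
  - rewrite Heq. apply Ropp_lt_cancel.
    apply (Rlt_chain (fun m => - t m)); [|lia]. intros m Hm. cbv beta.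
    rewrite Hsucc. pose proof (Ht m). pose proof (Hdown m ltac:(lia)). nra.
Qed.

Definition ML_term (lambda alpha beta : R) (j : nat) : R :=
  lambda ^ j / Gamma (alpha * INR j + beta).

Definition ML_ratio (alpha beta : R) (j : nat) : R :=
  Gamma (alpha * INR j + alpha + beta) / Gamma (alpha * INR j + beta).

Section MittagLefflerTerms.

Variables alpha beta : R.
Hypothesis alpha_pos : 0 < alpha.
Hypothesis beta_pos : 0 < beta.

Lemma ML_arg_pos j : 0 < alpha * INR j + beta.
Proof. pose proof (pos_INR j). nra. Qed.

Lemma ML_ratio_pos j : 0 < ML_ratio alpha beta j.
Proof.
  pose proof (ML_arg_pos j).
  apply Rdiv_lt_0_compat; apply Gamma_pos; lra.
Qed.

Lemma ML_ratio_lt_succ j : ML_ratio alpha beta j < ML_ratio alpha beta (S j).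
Proof.
  unfold ML_ratio. rewrite S_INR.
  replace (alpha * (INR j + 1) + beta) with (alpha * INR j + beta + alpha) by ring.
  replace (alpha * (INR j + 1) + alpha + beta)
    with (alpha * INR j + beta + alpha + alpha) by ring.
  replace (alpha * INR j + alpha + beta) with (alpha * INR j + beta + alpha) by ring.
  pose proof (ML_arg_pos j) as Hx. set (x := alpha * INR j + beta) in *.
  pose proof (Gamma_cross_lt x (x + alpha) alpha ltac:(lra) alpha_pos) as Hcross.
  pose proof (Gamma_pos x Hx). pose proof (Gamma_pos (x + alpha) ltac:(lra)).
  apply (Rmult_lt_reg_r (Gamma x * Gamma (x + alpha))); [nra|].
  replace (Gamma (x + alpha) / Gamma x * (Gamma x * Gamma (x + alpha)))
    with (Gamma (x + alpha) * Gamma (x + alpha)) by (field; lra).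
  replace (Gamma (x + alpha + alpha) / Gamma (x + alpha) * (Gamma x * Gamma (x + alpha)))
    with (Gamma x * Gamma (x + alpha + alpha)) by (field; lra).
  exact Hcross.
Qed.

Lemma ML_ratio_lt i j : (i < j)%nat -> ML_ratio alpha beta i < ML_ratio alpha beta j.
Proof. apply Rlt_chain. intros m _. apply ML_ratio_lt_succ. Qed.

Lemma ML_term_pos lambda j : 0 < lambda -> 0 < ML_term lambda alpha beta j.
Proof.
  intros Hl. apply Rdiv_lt_0_compat; [apply pow_lt, Hl | apply Gamma_pos, ML_arg_pos].
Qed.

Lemma ML_term_succ lambda j :
  ML_term lambda alpha beta (S j)
  = ML_term lambda alpha beta j * (lambda / ML_ratio alpha beta j).
Proof.
  unfold ML_term, ML_ratio.
  replace (alpha * INR (S j) + beta) with (alpha * INR j + alpha + beta)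
    by (rewrite S_INR; ring).
  pose proof (ML_arg_pos j).
  pose proof (Gamma_pos _ (ML_arg_pos j)).
  pose proof (Gamma_pos (alpha * INR j + alpha + beta) ltac:(lra)).
  simpl. field. lra.
Qed.

Lemma MittagLeffler_pos lambda N :
  0 < lambda -> lambda < ML_ratio alpha beta N -> 0 < MittagLeffler alpha beta lambda.
Proof.
  intros Hl HN. pose proof (ML_ratio_pos N) as HrN.
  set (q := lambda / ML_ratio alpha beta N).
  assert (Hq : 0 <= q < 1).
  { split; [left; apply Rdiv_lt_0_compat; assumption|].
    apply (Rmult_lt_reg_r (ML_ratio alpha beta N)); [exact HrN|].
    unfold q; field_simplify; lra. }
  assert (Hratio : forall m, (N <= m)%nat ->
            ML_term lambda alpha beta (S m) <= q * ML_term lambda alpha beta m).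
  { intros m Hm. rewrite ML_term_succ, Rmult_comm.
    apply Rmult_le_compat_r; [left; apply ML_term_pos, Hl|].
    unfold q. apply Rmult_le_compat_l; [lra|]. apply Rinv_le_contravar; [exact HrN|].
    destruct (Nat.eq_dec N m) as [-> | HNm]; [lra|].
    left; apply ML_ratio_lt; lia. }
  destruct (sum_cv_of_ratio_le _ N q (fun j => ML_term_pos lambda j Hl) Hq Hratio)
    as [l Hsum].
  apply (infinite_sum_pos (ML_term lambda alpha beta)); [intros j; apply ML_term_pos, Hl|].
  unfold MittagLeffler. apply epsilon_spec. exists l. exact Hsum.
Qed.

Lemma MLFD_pmf_ML_term lambda j :
  MLFD_pmf lambda alpha beta j = ML_term lambda alpha beta j / MittagLeffler alpha beta lambda.
Proof. unfold MLFD_pmf, ML_term, Rdiv. rewrite Rinv_mult. ring. Qed.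

Lemma ML_term_two_modes k :
  let t := ML_term (ML_ratio alpha beta k) alpha beta in
  t k = t (S k) /\ (forall j, j <> k -> j <> S k -> t j < t k).
Proof.
  intros t. pose proof (ML_ratio_pos k).
  apply (two_modes_of_ratio t (fun j => ML_ratio alpha beta k / ML_ratio alpha beta j)).
  - intros j. apply ML_term_pos. assumption.
  - intros j. apply ML_term_succ.
  - intros j Hj. pose proof (ML_ratio_pos j). pose proof (ML_ratio_lt j k Hj).
    apply (Rmult_lt_reg_r (ML_ratio alpha beta j)); [assumption|]. field_simplify; lra.
  - field. lra.
  - intros j Hj. pose proof (ML_ratio_pos j). pose proof (ML_ratio_lt k j Hj).
    apply (Rmult_lt_reg_r (ML_ratio alpha beta j)); [assumption|]. field_simplify; lra.
Qed.

End MittagLefflerTerms.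

Theorem mainTheorem7 (alpha beta : R) (k : nat) :
  0 < alpha -> 0 < beta ->
  let lambda := Gamma (alpha * INR k + alpha + beta) / Gamma (alpha * INR k + beta) in
  MLFD_pmf lambda alpha beta k = MLFD_pmf lambda alpha beta (S k) /\
  (forall j : nat, j <> k -> j <> S k ->
     MLFD_pmf lambda alpha beta j < MLFD_pmf lambda alpha beta k).
Proof.
  intros Ha Hb lambda.
  change lambda with (ML_ratio alpha beta k).
  assert (HM : 0 < MittagLeffler alpha beta (ML_ratio alpha beta k)).
  { apply (MittagLeffler_pos alpha beta Ha Hb _ (S k)).
    - apply ML_ratio_pos; assumption.
    - apply ML_ratio_lt; auto. }
  destruct (ML_term_two_modes alpha beta Ha Hb k) as [Hmode Hless].
  split.
  - rewrite !MLFD_pmf_ML_term, Hmode. reflexivity.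
  - intros j Hjk HjSk. rewrite !MLFD_pmf_ML_term.
    apply Rmult_lt_compat_r; [apply Rinv_0_lt_compat, HM | apply Hless; assumption].
Qed.
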